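(* Let $F=\{f_i\}_{i=1}^N$ be a frame for an $n$-dimensional Hilbert space $\mathcal{H}_n$ with frame operator $S_F$, and let $p>1$. Let $L=\max\{\|S_F^{-1/2}f_i\|:1\le i\le N\}$, $I_1=\{i:\|S_F^{-1/2}f_i\|=L\}$, $I_2=\{1,\dots,N\}\setminus I_1$, and $H_j=\mathrm{span}\{f_i:i\in I_j\}$ for $j=1,2$. Suppose (i) $H_1\cap H_2=\{0\}$ and (ii) $\{f_i:i\in I_2\}$ is linearly independent. Then the canonical dual frame $S_F^{-1}F=\{S_F^{-1}f_i\}_{i=1}^N$ is a $1$-erasure spectrally optimal dual frame of $F$, i.e. $S_F^{-1}F\in\zeta_{\mathfrak{R}}^{(1),p}(F)$.
   Context: $S_F f=\sum_i\langle f,f_i\rangle f_i$ is the (positive invertible) frame operator. $G=\{g_i\}$ is a dual of $F$ if $f=\sum_i\langle f,f_i\rangle g_i$ for all $f$. For a dual $G$, $\mathrm{AE}_{\mathfrak{R}}^{(1),p}(F,G)=\{\frac1N\sum_{i=1}^N|\langle f_i,g_i\rangle|^p\}^{1/p}$ (the $\ell^p$-average of the spectral radii of the one-erasure error operators $f\mapsto\langle f,f_i\rangle g_i$), and $\zeta_{\mathfrak{R}}^{(1),p}(F)$ is the set of duals minimizing it over all duals of $F$. *)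

From HB Require Import structures.
From mathcomp Require Import all_boot all_order all_algebra.
From mathcomp Require Import reals exp.
From mathcomp Require Import complex.
From Stdlib Require Import ClassicalEpsilon.
Set Implicit Arguments. Unset Strict Implicit. Unset Printing Implicit Defensive.
Import Order.TTheory GRing.Theory Num.Theory.
Local Open Scope ring_scope.

(* The n-dimensional Hilbert space H_n is identified (via an orthonormal
   basis) with C^n, C = R[i], realised as row vectors 'rV[R[i]]_n with the
   standard inner product <u, v> = sum_k u_k * conj(v_k). *)

Definition cadj (R : realType) (m k : nat) (A : 'M[R[i]]_(m, k)) : 'M[R[i]]_(k, m) :=
  (map_mx (@conjc R) A)^T.

Definition ip (R : realType) (n : nat) (u v : 'rV[R[i]]_n) : R[i] :=
  (u *m cadj v) 0 0.

Definition vnorm (R : realType) (n : nat) (v : 'rV[R[i]]_n) : R :=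
  Num.sqrt (complex.Re (ip v v)).

Definition is_frame (R : realType) (n N : nat) (F : 'I_N -> 'rV[R[i]]_n) : Prop :=
  exists A B : R, 0 < A /\ 0 < B /\
    forall f : 'rV[R[i]]_n,
      A * vnorm f ^+ 2 <= \sum_i Normc.normc (ip f (F i)) ^+ 2 /\
      \sum_i Normc.normc (ip f (F i)) ^+ 2 <= B * vnorm f ^+ 2.

(* Matrix of the frame operator S_F f = sum_i <f, f_i> f_i, acting on row
   vectors from the right: S_F f = f *m frame_op F. *)
Definition frame_op (R : realType) (n N : nat) (F : 'I_N -> 'rV[R[i]]_n) : 'M[R[i]]_n :=
  \sum_i cadj (F i) *m F i.

Definition is_psd (R : realType) (n : nat) (B : 'M[R[i]]_n) : Prop :=
  cadj B = B /\ forall v : 'rV[R[i]]_n, 0 <= complex.Re (ip (v *m B) v)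
                                       /\ complex.Im (ip (v *m B) v) = 0.

Definition is_psd_sqrt (R : realType) (n : nat) (A B : 'M[R[i]]_n) : Prop :=
  is_psd B /\ B *m B = A.

Definition psd_sqrt (R : realType) (n : nat) (A : 'M[R[i]]_n) : 'M[R[i]]_n :=
  epsilon (inhabits 0) (is_psd_sqrt A).

Definition frame_op_invsqrt (R : realType) (n N : nat) (F : 'I_N -> 'rV[R[i]]_n) :=
  psd_sqrt (invmx (frame_op F)).

Definition Lmax (R : realType) (n N : nat) (F : 'I_N -> 'rV[R[i]]_n) : R :=
  \big[Num.max/0]_i vnorm (F i *m frame_op_invsqrt F).

Definition I1 (R : realType) (n N : nat) (F : 'I_N -> 'rV[R[i]]_n) : {set 'I_N} :=
  [set i | vnorm (F i *m frame_op_invsqrt F) == Lmax F].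

Definition I2 (R : realType) (n N : nat) (F : 'I_N -> 'rV[R[i]]_n) : {set 'I_N} :=
  ~: I1 F.

Definition span_of (R : realType) (n N : nat) (F : 'I_N -> 'rV[R[i]]_n)
  (I : {set 'I_N}) : 'M[R[i]]_n :=
  (\sum_(i in I) <<F i>>)%MS.

Definition lin_indep_on (R : realType) (n N : nat) (F : 'I_N -> 'rV[R[i]]_n)
  (I : {set 'I_N}) : Prop :=
  forall c : 'I_N -> R[i], \sum_(i in I) c i *: F i = 0 -> forall i, i \in I -> c i = 0.

Definition is_dual (R : realType) (n N : nat) (F G : 'I_N -> 'rV[R[i]]_n) : Prop :=
  forall f : 'rV[R[i]]_n, f = \sum_i ip f (F i) *: G i.

Definition AE1p (R : realType) (n N : nat) (p : R) (F G : 'I_N -> 'rV[R[i]]_n) : R :=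
  powR (N%:R^-1 * \sum_i powR (Normc.normc (ip (F i) (G i))) p) p^-1.

Definition zeta1p (R : realType) (n N : nat) (p : R) (F : 'I_N -> 'rV[R[i]]_n)
  (G : 'I_N -> 'rV[R[i]]_n) : Prop :=
  is_dual F G /\ forall G', is_dual F G' -> AE1p p F G <= AE1p p F G'.

Definition canonical_dual (R : realType) (n N : nat) (F : 'I_N -> 'rV[R[i]]_n) :
  'I_N -> 'rV[R[i]]_n :=
  fun i => F i *m invmx (frame_op F).

From mathcomp Require Import all_boot all_order all_algebra.
From mathcomp Require Import reals exp complex spectral ring.
From Stdlib Require Import ClassicalEpsilon.
Set Implicit Arguments. Unset Strict Implicit. Unset Printing Implicit Defensive.
Import Order.TTheory GRing.Theory Num.Theory.
Local Open Scope ring_scope.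
Local Open Scope sesquilinear_scope.

(* Any dual G differs from the canonical dual S^-1 F by a family U with
   sum_i f_i^* u_i = 0, i.e. sum_i <v, u_i> f_i = 0 for every v.  Splitting
   this sum along I1 and I2, the two parts lie in H1 and H2, so both vanish,
   and independence of {f_i}_{i in I2} forces u_i = 0 on I2; taking the trace
   of sum_{i in I1} u_i^* f_i = 0 then gives sum_{i in I1} <f_i, u_i> = 0.
   Since <f_i, S^-1 f_i> = ||S^-1/2 f_i||^2 = L^2 on I1, we get
   sum_{i in I1} <f_i, g_i> = |I1| L^2, and the triangle inequality with the
   convexity of t^p yields sum_{i in I1} |<f_i, g_i>|^p >= |I1| L^(2p), the
   value of the canonical dual; the terms over I2 are unchanged. *)

Section Adjoint.
Variable R : realType.

Lemma cadjK m k (A : 'M[R[i]]_(m, k)) : cadj (cadj A) = A.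
Proof. by apply/matrixP=> a b; rewrite /cadj !mxE conjcK. Qed.

Lemma cadjM m k l (A : 'M[R[i]]_(m, k)) (B : 'M[R[i]]_(k, l)) :
  cadj (A *m B) = cadj B *m cadj A.
Proof. by rewrite /cadj map_mxM trmx_mul. Qed.

Lemma cadjD m k (A B : 'M[R[i]]_(m, k)) : cadj (A + B) = cadj A + cadj B.
Proof. by apply/matrixP=> a b; rewrite /cadj !mxE rmorphD. Qed.

Lemma cadj0 m k : cadj (0 : 'M[R[i]]_(m, k)) = 0.
Proof. by apply/matrixP=> a b; rewrite /cadj !mxE rmorph0. Qed.

Lemma cadj_sum m k (I : finType) (P : pred I) (A : I -> 'M[R[i]]_(m, k)) :
  cadj (\sum_(i | P i) A i) = \sum_(i | P i) cadj (A i).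
Proof. exact: (big_morph _ (@cadjD m k) (@cadj0 m k)). Qed.

Lemma cadj1 n : cadj (1%:M : 'M[R[i]]_n) = 1%:M.
Proof. by rewrite /cadj map_mx1 trmx1. Qed.

Lemma cadj_diag n (e : 'rV[R[i]]_n) :
  cadj (diag_mx e) = diag_mx (\row_k (e 0 k)^*).
Proof.
apply/matrixP=> a b; rewrite /cadj !mxE rmorphMn /= eq_sym.
by case: eqVneq => [->|]; rewrite ?mulr1n ?mulr0n.
Qed.

Lemma cadj_delta n (k : 'I_n) : cadj (delta_mx 0 k : 'rV[R[i]]_n) = delta_mx k 0.
Proof. by apply/matrixP=> a b; rewrite /cadj !mxE rmorph_nat andbC. Qed.

Lemma cadj_mx11 (x : 'M[R[i]]_1) : cadj x 0 0 = (x 0 0)^*.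
Proof. by rewrite /cadj !mxE. Qed.

Lemma cadjE m k (A : 'M[R[i]]_(m, k)) : cadj A = A ^t*.
Proof. by rewrite /cadj map_trmx. Qed.

End Adjoint.

Section InnerProduct.
Variables (R : realType) (n : nat).
Implicit Types u v w : 'rV[R[i]]_n.

Lemma scale_ip u v w : ip u v *: w = u *m cadj v *m w.
Proof. by apply/matrixP=> a b; rewrite !mxE big_ord1 !ord1. Qed.

Lemma ipDr u v w : ip u (v + w) = ip u v + ip u w.
Proof. by rewrite /ip cadjD mulmxDr mxE. Qed.

Lemma ipvv_ge0 v : 0 <= ip v v.
Proof.
rewrite /ip mxE; apply: sumr_ge0 => k _; rewrite /cadj !mxE.
exact: mul_conjC_ge0.
Qed.

Lemma ipvv_eq0 v : ip v v = 0 -> v = 0.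
Proof.
rewrite /ip mxE => /eqP; rewrite psumr_eq0 => [/allP Hv|k _]; last first.
  by rewrite /cadj !mxE; exact: mul_conjC_ge0.
apply/rowP=> k; apply/eqP; rewrite mxE -mul_conjC_eq0.
by have := Hv k (mem_index_enum k); rewrite /cadj !mxE.
Qed.

Lemma ipvvE v : ip v v = ((vnorm v ^+ 2)%:C)%C.
Proof.
have := ipvv_ge0 v; rewrite lecE /vnorm => /andP[/eqP Him Hre].
by rewrite sqr_sqrtr //; move: Him Hre; case: (ip v v) => a b /= ->.
Qed.

End InnerProduct.

Section PsdSqrt.
Variables (R : realType) (n : nat).
Implicit Types (P M : 'M[R[i]]_n) (e : 'rV[R[i]]_n).

Definition conj_diag P e := cadj P *m diag_mx e *m P.

Lemma conj_diagM P e e' : P \is unitarymx ->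
  conj_diag P e *m conj_diag P e' = conj_diag P (\row_k (e 0 k * e' 0 k)).
Proof.
move=> Pu; rewrite /conj_diag -!mulmxA; congr (_ *m _); rewrite !mulmxA.
rewrite cadjE (mulmxtVK _ Pu); congr (_ *m _).
apply/matrixP=> a b; rewrite mul_diag_mx !mxE.
by case: eqP => _; rewrite ?mulr1n ?mulr0n ?mulr0.
Qed.

Lemma cadj_conj_diag P e : (forall k, (e 0 k)^* = e 0 k) ->
  cadj (conj_diag P e) = conj_diag P e.
Proof.
move=> He; rewrite /conj_diag !cadjM cadjK cadj_diag mulmxA.
by congr (_ *m diag_mx _ *m _); apply/rowP=> k; rewrite mxE He.
Qed.

Lemma psd_spectral M : cadj M = M -> (forall v, 0 <= ip (v *m M) v) ->
  exists2 P, P \is unitarymx & exists2 d, M = conj_diag P d & forall k, 0 <= d 0 k.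
Proof.
move=> Mherm Mpsd.
have /hermitian_normalmx/orthomx_spectralP MP : M \is hermsymmx.
  by apply/is_hermitianmxP; rewrite expr0 scale1r -cadjE Mherm.
have Pu := spectral_unitarymx M.
set P := spectralmx M in MP Pu; set d := spectral_diag M in MP.
have MPd : M = conj_diag P d by rewrite /conj_diag cadjE -invmx_unitary.
exists P => //; exists d => // k.
have PMP : P *m M *m cadj P = diag_mx d.
  rewrite MPd /conj_diag cadjE !mulmxA (unitarymxP Pu) mul1mx -mulmxA.
  by rewrite (unitarymxP Pu) mulmx1.
pose ek : 'rV[R[i]]_n := delta_mx 0 k.
have := Mpsd (ek *m P); rewrite /ip cadjM !mulmxA -(mulmxA ek) -(mulmxA ek) PMP.
by rewrite /ek -rowE row_diag_mx cadj_delta -scalemxAl mul_delta_mx !mxE eqxx mulr1.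
Qed.

Lemma psd_sqrt_exists M : cadj M = M -> (forall v, 0 <= ip (v *m M) v) ->
  exists B, is_psd_sqrt M B.
Proof.
move=> Mherm Mpsd; have [P Pu [d -> d_ge0]] := psd_spectral Mherm Mpsd.
pose s := \row_k sqrtC (d 0 k); pose t := \row_k sqrtC (s 0 k).
have s_real k : (s 0 k)^* = s 0 k by apply: geC0_conj; rewrite mxE sqrtC_ge0 d_ge0.
have t_real k : (t 0 k)^* = t 0 k.
  by apply: geC0_conj; rewrite mxE sqrtC_ge0 mxE sqrtC_ge0 d_ge0.
have ss : conj_diag P s *m conj_diag P s = conj_diag P d.
  by rewrite conj_diagM //; congr conj_diag; apply/rowP=> k; rewrite !mxE -expr2 sqrtCK.
have tt : conj_diag P t *m conj_diag P t = conj_diag P s.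
  by rewrite conj_diagM //; congr conj_diag; apply/rowP=> k; rewrite !mxE -expr2 sqrtCK.
exists (conj_diag P s); split=> //; split; first exact: cadj_conj_diag.
(* [conj_diag P s] is the square of the self-adjoint [conj_diag P t]. *)
move=> v; have := ipvv_ge0 (v *m conj_diag P t).
rewrite /ip cadjM (cadj_conj_diag _ t_real) mulmxA -(mulmxA v) tt.
by rewrite lecE => /andP[/eqP-> ->].
Qed.

End PsdSqrt.

Section FrameOperator.
Variables (R : realType) (n N : nat) (F : 'I_N -> 'rV[R[i]]_n).

Lemma frame_opE f : f *m frame_op F = \sum_i ip f (F i) *: F i.
Proof.
by rewrite /frame_op mulmx_sumr; apply: eq_bigr => i _; rewrite mulmxA scale_ip.
Qed.

Lemma cadj_frame_op : cadj (frame_op F) = frame_op F.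
Proof. by rewrite /frame_op cadj_sum; apply: eq_bigr => i _; rewrite cadjM cadjK. Qed.

Lemma ip_frame_op w : ip (w *m frame_op F) w = \sum_i ip w (F i) * (ip w (F i))^*.
Proof.
rewrite /ip frame_opE mulmx_suml summxE; apply: eq_bigr => i _.
by rewrite scale_ip -mulmxA mxE big_ord1 -[F i *m cadj w]cadjK cadjM cadjK cadj_mx11.
Qed.

Lemma frame_op_kernel v : v *m frame_op F = 0 -> forall i, ip v (F i) = 0.
Proof.
move=> vS i; apply/eqP; rewrite -mul_conjC_eq0; apply/eqP.
apply: (psumr_eq0P (P := predT) (F := fun j => ip v (F j) * (ip v (F j))^*)) => //.
  by move=> j _; exact: mul_conjC_ge0.
by rewrite -ip_frame_op vS /ip mul0mx mxE.
Qed.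

Hypothesis frameF : is_frame F.

Lemma frame_op_unit : frame_op F \in unitmx.
Proof.
have [A [B [A_gt0 [_ boundsF]]]] := frameF.
rewrite unitmxE unitfE; apply/negP => /det0P[v /negP v_neq0 vS]; apply: v_neq0.
have [lower _] := boundsF v.
rewrite big1 in lower; last by move=> i _; rewrite frame_op_kernel // Normc.normc0 expr0n.
rewrite pmulr_rle0 // in lower.
have v0 : vnorm v ^+ 2 = 0 by apply/le_anti; rewrite lower sqr_ge0.
by apply/eqP/ipvv_eq0; rewrite ipvvE v0.
Qed.

Lemma canonical_dualP : is_dual F (canonical_dual F).
Proof.
move=> f; rewrite -{1}[f](mulmxK frame_op_unit) frame_opE mulmx_suml.
by apply: eq_bigr => i _; rewrite /canonical_dual scalemxAl.
Qed.

Lemma cadj_invmx_frame_op : cadj (invmx (frame_op F)) = invmx (frame_op F).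
Proof.
have Su := frame_op_unit.
have SinvS : cadj (invmx (frame_op F)) *m frame_op F = 1%:M.
  by rewrite -{2}cadj_frame_op -cadjM mulmxV // cadj1.
by rewrite -[LHS](mulmxK Su) SinvS mul1mx.
Qed.

Lemma invmx_frame_op_psd v : 0 <= ip (v *m invmx (frame_op F)) v.
Proof.
set w := v *m invmx (frame_op F).
have -> : v = w *m frame_op F by rewrite /w mulmxKV // frame_op_unit.
rewrite {1}/ip cadjM cadj_frame_op mulmxA -/(ip (w *m frame_op F) w) ip_frame_op.
by apply: sumr_ge0 => i _; exact: mul_conjC_ge0.
Qed.

Lemma frame_op_invsqrtP : is_psd_sqrt (invmx (frame_op F)) (frame_op_invsqrt F).
Proof.
apply: epsilon_spec; apply: psd_sqrt_exists invmx_frame_op_psd.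
exact: cadj_invmx_frame_op.
Qed.

Lemma ip_canonical_dual i :
  ip (F i) (canonical_dual F i) = ((vnorm (F i *m frame_op_invsqrt F) ^+ 2)%:C)%C.
Proof.
have [[B_herm _] BB] := frame_op_invsqrtP.
rewrite -ipvvE /ip /canonical_dual cadjM cadj_invmx_frame_op -BB.
by rewrite cadjM B_herm !mulmxA.
Qed.

End FrameOperator.

Section Duals.
Variables (R : realType) (n N : nat) (F G G' : 'I_N -> 'rV[R[i]]_n).

Lemma sum_scale_sub_span (J : {set 'I_N}) (c : 'I_N -> R[i]) :
  ((\sum_(i in J) c i *: F i)%R <= span_of F J)%MS.
Proof.
apply: summx_sub => i iJ; apply: scalemx_sub.
by apply: (sumsmx_sup i) => //; rewrite genmxE.
Qed.

Lemma dual_sum_cadj (H : 'I_N -> 'rV[R[i]]_n) :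
  is_dual F H -> \sum_i cadj (F i) *m H i = 1%:M.
Proof.
move=> dualH; apply/row_matrixP => j; rewrite !rowE mulmx1.
rewrite [RHS](dualH (delta_mx 0 j)) mulmx_sumr.
by apply: eq_bigr => i _; rewrite mulmxA scale_ip.
Qed.

Hypotheses (dualG : is_dual F G) (dualG' : is_dual F G').

Lemma dual_diff_adj_sum : \sum_i cadj (G i - G' i) *m F i = 0.
Proof.
rewrite -[LHS]cadjK cadj_sum.
under eq_bigr do rewrite cadjM cadjK mulmxBr.
by rewrite sumrB (dual_sum_cadj dualG) (dual_sum_cadj dualG') subrr cadj0.
Qed.

Lemma dual_diff_synthesis v : \sum_i ip v (G i - G' i) *: F i = 0.
Proof.
transitivity (v *m \sum_i cadj (G i - G' i) *m F i); last first.
  by rewrite dual_diff_adj_sum mulmx0.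
by rewrite mulmx_sumr; apply: eq_bigr => i _; rewrite scale_ip mulmxA.
Qed.

Variable J : {set 'I_N}.

Lemma dual_diff_eq0 :
  (span_of F J :&: span_of F (~: J) == (0 : 'M[R[i]]_n))%MS ->
  lin_indep_on F (~: J) -> {in ~: J, forall i, G i = G' i}.
Proof.
move=> /andP[capJ _] indepJ.
have ip_eq0 v : {in ~: J, forall i, ip v (G i - G' i) = 0}.
  apply: indepJ; apply/eqP; rewrite -submx0; apply: submx_trans capJ.
  have := dual_diff_synthesis v; rewrite (bigID (mem J)) /= => /eqP.
  rewrite addrC addr_eq0 => /eqP sumCE.
  rewrite sub_capmx sum_scale_sub_span andbT (eq_bigl _ _ (fun i => in_setC i J)) sumCE.
  by rewrite eqmx_opp sum_scale_sub_span.
by move=> i iJ; apply/eqP; rewrite -subr_eq0; apply/eqP/ipvv_eq0/ip_eq0.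
Qed.

Lemma dual_diff_ip_sum : {in ~: J, forall i, G i = G' i} ->
  \sum_(i in J) ip (F i) (G i - G' i) = 0.
Proof.
move=> eqG.
transitivity (\tr (\sum_i cadj (G i - G' i) *m F i)); last first.
  by rewrite dual_diff_adj_sum mxtrace0.
rewrite [in RHS](bigID (mem J)) /= [X in _ + X]big1 ?addr0 => [|i iJ]; last first.
  by rewrite eqG ?inE // subrr cadj0 mul0mx.
rewrite raddf_sum; apply: eq_bigr => i _ /=.
by rewrite mxtrace_mulC /mxtrace big_ord1.
Qed.

End Duals.

Section PowerMean.
Variable R : realType.

(* Young's inequality with exponents p and p/(p-1). *)
Lemma powR_tangent (x a p : R) : 0 <= x -> 0 <= a -> 1 < p ->
  p * (x * a `^ (p - 1)) <= x `^ p + (p - 1) * a `^ p.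
Proof.
move=> x_ge0 a_ge0 p_gt1.
have p_gt0 : 0 < p by apply: lt_trans p_gt1.
have p1_gt0 : 0 < p - 1 by rewrite subr_gt0.
pose q := p / (p - 1).
have q_gt0 : 0 < q by rewrite divr_gt0.
have pq : p^-1 + q^-1 = 1 by rewrite /q invf_div; field; rewrite gt_eqF.
have := conjugate_powR x_ge0 (powR_ge0 a (p - 1)) p_gt0 q_gt0 pq.
rewrite -powRrM (_ : (p - 1) * q = p); last by rewrite /q mulrC divfK ?gt_eqF.
have -> : x `^ p + (p - 1) * a `^ p = p * (x `^ p / p + a `^ p / q).
  by rewrite /q; field; rewrite !gt_eqF.
by rewrite ler_pM2l.
Qed.

Lemma power_mean_le (I : finType) (A : {pred I}) (x : I -> R) (a p : R) :
  1 < p -> 0 <= a -> (forall i, i \in A -> 0 <= x i) ->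
  #|A|%:R * a <= \sum_(i in A) x i ->
  #|A|%:R * a `^ p <= \sum_(i in A) x i `^ p.
Proof.
move=> p_gt1 a_ge0 x_ge0 sum_ge.
have p_gt0 : 0 < p by apply: lt_trans p_gt1.
set b := a `^ (p - 1).
have ab : a * b = a `^ p by rewrite /b mulr_powRB1.
apply: le_trans (_ : \sum_(i in A) (p * (x i * b) - (p - 1) * a `^ p) <= _); last first.
  by apply: ler_sum => i Ai; rewrite lerBlDr powR_tangent ?x_ge0.
rewrite sumrB sumr_const -mulr_sumr -mulr_suml -ab.
have -> : #|A|%:R * (a * b) = p * (#|A|%:R * a * b) - (p - 1) * (a * b) *+ #|A|.
  by ring.
rewrite lerD2r; apply: ler_wpM2l; first exact: ltW.
by apply: ler_wpM2r; [exact: powR_ge0 | exact: sum_ge].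
Qed.

End PowerMean.

Section Modulus.
Variable R : realType.

Lemma normc_ge0 (x : R[i]) : 0 <= Normc.normc x.
Proof. by case: x => a b; rewrite /Normc.normc sqrtr_ge0. Qed.

Lemma normc_real (x : R) : 0 <= x -> Normc.normc (x%:C)%C = x.
Proof. by move=> x_ge0; rewrite /Normc.normc /= expr0n /= addr0 sqrtr_sqr ger0_norm. Qed.

Lemma normc_sum_le (I : finType) (A : {pred I}) (f : I -> R[i]) :
  Normc.normc (\sum_(i in A) f i) <= \sum_(i in A) Normc.normc (f i).
Proof.
elim/big_ind2: _ => [|x1 x2 y1 y2 le1 le2|//]; first by rewrite Normc.normc0.
exact: le_trans (le_normcD _ _) (lerD le1 le2).
Qed.

End Modulus.

Section ErasureError.
Variables (R : realType) (n N : nat) (F : 'I_N -> 'rV[R[i]]_n).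

Lemma AE1p_le (p : R) (G G' : 'I_N -> 'rV[R[i]]_n) : 0 <= p ->
  \sum_i Normc.normc (ip (F i) (G i)) `^ p <= \sum_i Normc.normc (ip (F i) (G' i)) `^ p ->
  AE1p p F G <= AE1p p F G'.
Proof.
move=> p_ge0 le_sum; have N_ge0 : 0 <= N%:R^-1 :> R by rewrite invr_ge0 ler0n.
have AE_ge0 (H : 'I_N -> 'rV[R[i]]_n) :
    N%:R^-1 * \sum_i Normc.normc (ip (F i) (H i)) `^ p \is Num.nneg.
  by rewrite nnegrE; apply: mulr_ge0 N_ge0 _; apply: sumr_ge0 => i _; exact: powR_ge0.
rewrite /AE1p; apply: ge0_ler_powR (AE_ge0 G) (AE_ge0 G') _; first by rewrite invr_ge0.
exact: ler_wpM2l.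
Qed.

Lemma ip_canonical_dual_I1 : is_frame F ->
  {in I1 F, forall i, ip (F i) (canonical_dual F i) = ((Lmax F ^+ 2)%:C)%C}.
Proof. by move=> frameF i; rewrite inE => /eqP <-; exact: ip_canonical_dual. Qed.

Lemma canonical_dual_min_I1 (p : R) (G : 'I_N -> 'rV[R[i]]_n) : is_frame F -> 1 < p ->
  \sum_(i in I1 F) ip (F i) (G i - canonical_dual F i) = 0 ->
  \sum_(i in I1 F) Normc.normc (ip (F i) (canonical_dual F i)) `^ p <=
  \sum_(i in I1 F) Normc.normc (ip (F i) (G i)) `^ p.
Proof.
move=> frameF p_gt1 sum_diff0; have ipC := ip_canonical_dual_I1 frameF.
have a_ge0 : 0 <= Lmax F ^+ 2 := sqr_ge0 _.
apply: (@le_trans _ _ (\sum_(i in I1 F) (Lmax F ^+ 2) `^ p)).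
  by apply: ler_sum => i /ipC ->; rewrite (normc_real a_ge0) lexx.
rewrite sumr_const -mulr_natl.
apply: (power_mean_le p_gt1 a_ge0 (fun i _ => normc_ge0 _)).
apply: le_trans (normc_sum_le _ _).
have -> : \sum_(i in I1 F) ip (F i) (G i) = ((Lmax F ^+ 2)%:C)%C *+ #|I1 F|.
  transitivity (\sum_(i in I1 F)
      (ip (F i) (canonical_dual F i) + ip (F i) (G i - canonical_dual F i))).
    by apply: eq_bigr => i _; rewrite -ipDr addrC subrK.
  by rewrite big_split /= sum_diff0 addr0 (eq_bigr _ ipC) sumr_const.
by rewrite normcMn (normc_real a_ge0) mulr_natl lexx.
Qed.

End ErasureError.

Theorem theorem5p5 (R : realType) (n N : nat) (F : 'I_N -> 'rV[R[i]]_n) (p : R) :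
  is_frame F -> 1 < p ->
  (span_of F (I1 F) :&: span_of F (I2 F) == (0 : 'M[R[i]]_n))%MS ->
  lin_indep_on F (I2 F) ->
  zeta1p p F (canonical_dual F).
Proof.
move=> frameF p_gt1 capI indepI2; have dualC := canonical_dualP frameF.
split=> [//|G dualG]; apply: AE1p_le; first exact/ltW/(lt_trans ltr01 p_gt1).
have eqG := dual_diff_eq0 dualG dualC capI indepI2.
have sum_diff0 := dual_diff_ip_sum dualG dualC eqG.
rewrite [X in X <= _](bigID (mem (I1 F))) [X in _ <= X](bigID (mem (I1 F))) /=.
apply: lerD; first exact: canonical_dual_min_I1 frameF p_gt1 sum_diff0.
by apply: ler_sum => i iI2; rewrite eqG ?lexx // inE.
Qed.
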